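(* Let $(\mu_z^\varepsilon)$ be a time-analytic local random walk on $\mathcal G$. Then for every pair of distinct vertices $x,y$, \[ {}^{\mathcal O}\mathrm{Ric}(x,y)=\inf\Big\{\nabla_{yx}\mathcal L f\ :\ f:\mathcal K_{xy}\to\mathbb R,\ |f(u)-f(v)|\le\mathrm d(u,v)\ \forall u,v\in\mathcal K_{xy},\ \nabla_{xy}f=1\Big\}, \] where $\mathcal L f(z):=\sum_{w\neq z}\big(f(w)-f(z)\big)\,\frac{d}{d\varepsilon}\big|_{\varepsilon=0}\mu_z^\varepsilon(w)$.
   Context: $\mathcal G$ is a locally finite graph with vertex set $V$, distance $\mathrm d$ on $V$ with $(V,\mathrm d)$ complete. A random walk is a family of probability measures $\mu_z^\varepsilon$ ($z\in V$, $\varepsilon\in[0,1]$) with finite first moments, continuous in $\varepsilon$, $\mu_z^0=\delta_z$. It is local if for each $z$ there is a finite $\mathcal K_z\subset V$ with $\mathrm{supp}(\mu_z^\varepsilon)\subset\mathcal K_z$ for all $\varepsilon$ (so the sum defining $\mathcal Lf(z)$ runs over $w\in\mathcal K_z\setminus\{z\}$); $\mathcal K_{xy}:=\mathcal K_x\cup\mathcal K_y$. It is time-analytic if each $\varepsilon\mapsto\mu_x^\varepsilon(y)$ is analytic and extends analytically to $(-\delta_{xy},1+\delta_{xy})$ for some $\delta_{xy}>0$. ${}^{\mathcal O}\mathrm{Ric}_\varepsilon(x,y):=1-\mathcal W_1(\mu_x^\varepsilon,\mu_y^\varepsilon)/\mathrm d(x,y)$ and ${}^{\mathcal O}\mathrm{Ric}(x,y):=\lim_{\varepsilon\downarrow0}\varepsilon^{-1}{}^{\mathcal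 O}\mathrm{Ric}_\varepsilon(x,y)$. $\nabla_{xy}f:=(f(y)-f(x))/\mathrm d(x,y)$. *)

From Coquelicot Require Import Coquelicot.
From Stdlib Require Import Reals ClassicalEpsilon List Lra.
Open Scope R_scope.

Section Defs.
Variable V : Type.

Definition Vdec (a b : V) : {a = b} + {a <> b} := excluded_middle_informative (a = b).

(* sum of F over the finite set represented by the list l (duplicates removed) *)
Definition lsum (l : list V) (F : V -> R) : R :=
  fold_right Rplus 0 (map F (nodup Vdec l)).

Definition is_metric (d : V -> V -> R) : Prop :=
  (forall u v, 0 <= d u v) /\ (forall u v, d u v = 0 <-> u = v) /\
  (forall u v, d u v = d v u) /\ (forall u v w, d u w <= d u v + d v w).

Definition complete_metric (d : V -> V -> R) : Prop :=
  forall s : nat -> V,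
    (forall e, 0 < e -> exists N, forall n m, (N <= n)%nat -> (N <= m)%nat -> d (s n) (s m) < e) ->
    exists l, forall e, 0 < e -> exists N, forall n, (N <= n)%nat -> d (s n) l < e.

Definition locally_finite_graph (E : V -> V -> Prop) : Prop :=
  (forall u v, E u v -> E v u) /\ (forall u, ~ E u u) /\
  (forall u, exists l : list V, forall v, E u v -> In v l).

(* A random walk mu z eps w = mu_z^eps(w), eps in [0,1], which is local with
   supports in the finite sets K z (so each mu_z^eps is a finitely supported
   probability measure; finite first moments are then automatic). *)
Definition local_random_walk (mu : V -> R -> V -> R) (K : V -> list V) : Prop :=
  (forall z eps w, 0 <= eps <= 1 -> 0 <= mu z eps w) /\
  (forall z eps w, 0 <= eps <= 1 -> mu z eps w <> 0 -> In w (K z)) /\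
  (forall z eps, 0 <= eps <= 1 -> lsum (K z) (mu z eps) = 1) /\
  (forall z w, mu z 0 w = if Vdec w z then 1 else 0) /\
  (forall z w eps, 0 <= eps <= 1 ->
     forall e, 0 < e -> exists r, 0 < r /\
       forall s, 0 <= s <= 1 -> Rabs (s - eps) < r -> Rabs (mu z s w - mu z eps w) < e).

Definition analytic_on (g : R -> R) (a b : R) : Prop :=
  forall t, a < t < b -> exists (c : nat -> R) (r : R), 0 < r /\
    forall s, Rabs (s - t) < r -> is_pseries c (s - t) (g s).

Definition time_analytic (mu : V -> R -> V -> R) : Prop :=
  forall x y, exists delta, 0 < delta /\ exists g : R -> R,
    (forall eps, 0 <= eps <= 1 -> g eps = mu x eps y) /\ analytic_on g (- delta) (1 + delta).

Definition has_rderiv0 (g : R -> R) (l : R) : Prop :=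
  filterlim (fun e => (g e - g 0) / e) (at_right 0) (locally l).
Definition rderiv0 (g : R -> R) : R := epsilon (inhabits 0) (has_rderiv0 g).

Definition Lap (mu : V -> R -> V -> R) (K : V -> list V) (f : V -> R) (z : V) : R :=
  lsum (K z) (fun w => if Vdec w z then 0 else (f w - f z) * rderiv0 (fun e => mu z e w)).

Definition Kxy (K : V -> list V) (x y : V) : list V := K x ++ K y.

(* couplings of m1, m2 supported in the finite set S (containing both supports) *)
Definition coupling (S : list V) (m1 m2 : V -> R) (pi : V -> V -> R) : Prop :=
  (forall u v, In u S -> In v S -> 0 <= pi u v) /\
  (forall u, In u S -> lsum S (fun v => pi u v) = m1 u) /\
  (forall v, In v S -> lsum S (fun u => pi u v) = m2 v).

Definition W1 (d : V -> V -> R) (S : list V) (m1 m2 : V -> R) : R :=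
  real (Glb_Rbar (fun c => exists pi, coupling S m1 m2 pi /\
                   c = lsum S (fun u => lsum S (fun v => pi u v * d u v)))).

Definition Ric_eps (d : V -> V -> R) (mu : V -> R -> V -> R) (K : V -> list V)
  (eps : R) (x y : V) : R :=
  1 - W1 d (Kxy K x y) (mu x eps) (mu y eps) / d x y.

Definition grad (d : V -> V -> R) (x y : V) (f : V -> R) : R := (f y - f x) / d x y.

End Defs.
Arguments Vdec {V}. Arguments lsum {V}. Arguments is_metric {V}. Arguments complete_metric {V}.
Arguments locally_finite_graph {V}. Arguments local_random_walk {V}. Arguments time_analytic {V}.
Arguments Lap {V}. Arguments Kxy {V}. Arguments coupling {V}. Arguments W1 {V}. Arguments Ric_eps {V}. Arguments grad {V}.

(* Kantorovich duality, proved here for finitely supported measures from Farkas' lemma,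
   gives W1(mu_x^e, mu_y^e) = sup_h sum_w h(w) (mu_y^e(w) - mu_x^e(w)) over the 1-Lipschitz
   h on K_xy. Time-analyticity makes every e |-> mu_z^e(w) right-differentiable at 0, so
   uniformly in h the dual objective is h(y) - h(x) + e (L h(y) - L h(x)) + o(e).
   Testing with an admissible f (1-Lipschitz with gradient 1 from x to y) gives
   W1 >= d(x,y) (1 - e grad_yx(L f)) - o(e). Conversely a 1-Lipschitz h is compared with the
   admissible f = min(h - h(x) + t, d(x,.)), where t = d(x,y) - (h(y) - h(x)): the gaps
   L h(y) - L h(x) and L f(y) - L f(x) differ by at most t C, where C is the l^1 distance
   between the jump rates at y and at x, and this is absorbed by the deficit t once
   e C <= 1. Hence W1 <= d(x,y) (1 - e kappa) + o(e) for the infimum kappa, and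
   (1 - W1 / d(x,y)) / e -> kappa. *)

From Coquelicot Require Import Coquelicot.
From Stdlib Require Import Reals List Lra Permutation ClassicalEpsilon Classical.
From Stdlib Require FinFun.
Open Scope R_scope.

(** * Finite sums over lists *)

Fixpoint sumL {A : Type} (l : list A) (F : A -> R) : R :=
  match l with nil => 0 | a :: l' => F a + sumL l' F end.

Section FiniteSums.
Context {A : Type}.
Implicit Types (l : list A) (F G : A -> R).

Lemma sumL_ext l F G : (forall a, In a l -> F a = G a) -> sumL l F = sumL l G.
Proof.
  induction l as [|a l IH]; intros H; simpl; [reflexivity|].
  rewrite (H a (or_introl eq_refl)), IH; [reflexivity|]. intros b Hb; apply H; right; exact Hb.
Qed.

Lemma sumL_plus l F G : sumL l (fun a => F a + G a) = sumL l F + sumL l G.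
Proof. induction l; simpl; [lra | rewrite IHl; lra]. Qed.

Lemma sumL_minus l F G : sumL l (fun a => F a - G a) = sumL l F - sumL l G.
Proof. induction l; simpl; [lra | rewrite IHl; lra]. Qed.

Lemma sumL_scal_l l c F : sumL l (fun a => c * F a) = c * sumL l F.
Proof. induction l; simpl; [lra | rewrite IHl; lra]. Qed.

Lemma sumL_scal_r l c F : sumL l (fun a => F a * c) = sumL l F * c.
Proof. induction l; simpl; [lra | rewrite IHl; lra]. Qed.

Lemma sumL_le l F G : (forall a, In a l -> F a <= G a) -> sumL l F <= sumL l G.
Proof.
  induction l as [|a l IH]; intros H; simpl; [lra|].
  pose proof (H a (or_introl eq_refl)).
  pose proof (IH (fun b Hb => H b (or_intror Hb))). lra.
Qed.

Lemma sumL_const0 l : sumL l (fun _ => 0) = 0.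
Proof. induction l; simpl; [|rewrite IHl]; lra. Qed.

Lemma sumL_nonneg l F : (forall a, In a l -> 0 <= F a) -> 0 <= sumL l F.
Proof. intros H; rewrite <- (sumL_const0 l); apply sumL_le, H. Qed.

Lemma sumL_eq0 l F : (forall a, In a l -> F a = 0) -> sumL l F = 0.
Proof. intros H; rewrite <- (sumL_const0 l); apply sumL_ext, H. Qed.

Lemma sumL_abs l F : Rabs (sumL l F) <= sumL l (fun a => Rabs (F a)).
Proof.
  induction l; simpl; [rewrite Rabs_R0; lra|].
  eapply Rle_trans; [apply Rabs_triang | lra].
Qed.

Lemma sumL_ge_single l F a : In a l -> (forall b, In b l -> 0 <= F b) -> F a <= sumL l F.
Proof.
  induction l as [|b l IH]; simpl; intros Ha H; [destruct Ha|].
  destruct Ha as [->|Ha].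
  - pose proof (sumL_nonneg l F (fun c Hc => H c (or_intror Hc))). lra.
  - pose proof (H b (or_introl eq_refl)). pose proof (IH Ha (fun c Hc => H c (or_intror Hc))). lra.
Qed.

Lemma sumL_app l1 l2 F : sumL (l1 ++ l2) F = sumL l1 F + sumL l2 F.
Proof. induction l1; simpl; [lra | rewrite IHl1; lra]. Qed.

Lemma sumL_filter_split l F (p : A -> bool) :
  sumL l F = sumL (filter p l) F + sumL (filter (fun a => negb (p a)) l) F.
Proof. induction l as [|a l IH]; simpl; [lra|]. destruct (p a); simpl; rewrite IH; lra. Qed.

Lemma filterlim_sumL {T : Type} {Fi : (T -> Prop) -> Prop} {FF : Filter Fi}
  l (G : A -> T -> R) (c : A -> R) :
  (forall a, In a l -> filterlim (G a) Fi (locally (c a))) ->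
  filterlim (fun t => sumL l (fun a => G a t)) Fi (locally (sumL l c)).
Proof.
  induction l as [|a l IH]; intros H; simpl; [apply filterlim_const|].
  eapply filterlim_comp_2;
    [apply H; left; reflexivity | apply IH; intros b Hb; apply H; right; exact Hb |].
  apply (filterlim_plus (c a) (sumL l c)).
Qed.

End FiniteSums.

Lemma sumL_map {A B : Type} (f : B -> A) (l : list B) (F : A -> R) :
  sumL (map f l) F = sumL l (fun b => F (f b)).
Proof. induction l; simpl; [reflexivity | now rewrite IHl]. Qed.

Lemma sumL_perm {A : Type} (l l' : list A) (F : A -> R) : Permutation l l' -> sumL l F = sumL l' F.
Proof. induction 1; simpl; lra. Qed.

Lemma sumL_swap {A B : Type} (l : list A) (l' : list B) (F : A -> B -> R) :
  sumL l (fun a => sumL l' (F a)) = sumL l' (fun b => sumL l (fun a => F a b)).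
Proof.
  induction l; simpl; [now rewrite sumL_const0|].
  rewrite IHl, <- sumL_plus; reflexivity.
Qed.

Lemma sumL_prod {A B : Type} (l : list A) (l' : list B) (F : A * B -> R) :
  sumL (list_prod l l') F = sumL l (fun a => sumL l' (fun b => F (a, b))).
Proof. induction l; simpl; [reflexivity|]. rewrite sumL_app, sumL_map, IHl; reflexivity. Qed.

Section DecidableSums.
Context {V : Type}.

Lemma lsum_sumL (l : list V) F : lsum l F = sumL (nodup Vdec l) F.
Proof. unfold lsum; induction (nodup Vdec l); simpl; [reflexivity | now rewrite IHl0]. Qed.

Lemma sumL_indicator (l : list V) (z : V) F : NoDup l -> In z l ->
  sumL l (fun w => F w * (if Vdec w z then 1 else 0)) = F z.
Proof.
  induction l as [|a l IH]; intros Hn Hz; simpl; [destruct Hz|].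
  inversion Hn as [|? ? Ha Hl]; subst.
  destruct (Vdec a z) as [->|Hne].
  - rewrite sumL_eq0; [lra|]. intros b Hb. destruct (Vdec b z); [congruence | lra].
  - rewrite IH; [lra | exact Hl |]. destruct Hz; [congruence | assumption].
Qed.

Lemma sumL_indicator_sym (l : list V) (z : V) F : NoDup l -> In z l ->
  sumL l (fun w => F w * (if Vdec z w then 1 else 0)) = F z.
Proof.
  intros Hn Hz. rewrite <- (sumL_indicator l z F Hn Hz). apply sumL_ext. intros w _.
  destruct (Vdec z w), (Vdec w z); congruence.
Qed.

Lemma sumL_incl (l l' : list V) F : NoDup l -> NoDup l' -> incl l l' ->
  (forall b, In b l' -> ~ In b l -> F b = 0) -> sumL l' F = sumL l F.
Proof.
  intros Hl Hl' Hincl H0. set (inl := fun b => if in_dec Vdec b l then true else false).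
  rewrite (sumL_filter_split l' F inl), (sumL_eq0 (filter (fun b => negb (inl b)) l')), Rplus_0_r.
  - apply sumL_perm, NoDup_Permutation; [now apply NoDup_filter | exact Hl |].
    intros b; rewrite filter_In; unfold inl.
    destruct (in_dec Vdec b l) as [Hb|Hb].
    + split; [intros [_ _]; exact Hb | intros _; split; [apply Hincl, Hb | reflexivity]].
    + split; [intros [_ H]; discriminate | intros H; contradiction].
  - intros b Hb. apply filter_In in Hb as [Hb Hn]. apply H0; [exact Hb|].
    unfold inl in Hn; destruct (in_dec Vdec b l); [discriminate | assumption].
Qed.

End DecidableSums.

(** * Farkas' lemma *)

Section Farkas.
Variables (I J : Type) (idx : list I).

Definition dot (y a : I -> R) : R := sumL idx (fun i => y i * a i).

Lemma dot_combr y a b s t : dot y (fun i => s * a i - t * b i) = s * dot y a - t * dot y b.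
Proof. unfold dot; rewrite <- !sumL_scal_l, <- sumL_minus; apply sumL_ext; intros; ring. Qed.

Lemma dot_combl y z a s t : dot (fun i => s * y i - t * z i) a = s * dot y a - t * dot z a.
Proof. unfold dot; rewrite <- !sumL_scal_l, <- sumL_minus; apply sumL_ext; intros; ring. Qed.

Definition cone (L : list J) (A : J -> I -> R) (b : I -> R) : Prop :=
  exists lam : J -> R, (forall j, In j L -> 0 <= lam j) /\
    forall i, In i idx -> b i = sumL L (fun j => lam j * A j i).

Definition separable (L : list J) (A : J -> I -> R) (b : I -> R) : Prop :=
  exists y : I -> R, (forall j, In j L -> 0 <= dot y (A j)) /\ dot y b < 0.

Lemma farkas_nil A b : cone nil A b \/ separable nil A b.
Proof.
  destruct (classic (forall i, In i idx -> b i = 0)) as [H|H].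
  - left. exists (fun _ => 0). split; [intros j []|]. intros i Hi; rewrite H; auto.
  - right. exists (fun i => - b i). split; [intros j []|].
    apply not_all_ex_not in H as [i0 Hi0]. apply imply_to_and in Hi0 as [Hin Hne].
    assert (b i0 * b i0 <= sumL idx (fun i => b i * b i)).
    { apply (sumL_ge_single idx (fun i => b i * b i) i0 Hin). intros; nra. }
    assert (0 < b i0 * b i0) by (destruct (Rtotal_order (b i0) 0) as [|[|]]; nra).
    unfold dot. rewrite (sumL_ext _ _ (fun i => -1 * (b i * b i))), sumL_scal_l by (intros; ring).
    lra.
Qed.

Lemma cone_cons j0 L A b (c : R) (lam : J -> R) : ~ In j0 L -> 0 <= c ->
  (forall j, In j L -> 0 <= lam j) ->
  (forall i, In i idx -> b i = c * A j0 i + sumL L (fun j => lam j * A j i)) ->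
  cone (j0 :: L) A b.
Proof.
  intros Hj0 Hc Hlam Hb.
  exists (fun j => if excluded_middle_informative (j = j0) then c else lam j). split.
  - intros j Hj. destruct (excluded_middle_informative (j = j0)); [exact Hc|].
    apply Hlam. destruct Hj; [congruence | assumption].
  - intros i Hi. simpl. destruct (excluded_middle_informative (j0 = j0)) as [_|]; [|congruence].
    rewrite Hb by exact Hi. f_equal. apply sumL_ext. intros j Hj.
    destruct (excluded_middle_informative (j = j0)); [subst; contradiction | reflexivity].
Qed.

(* Fourier-Motzkin step: eliminate the column [A j0] along [y]; projected vectors are
   orthogonal to [y]. *)
Definition project (y a0 a : I -> R) : I -> R := fun i => dot y a0 * a i - dot y a * a0 i.

Section Elimination.
Variables (j0 : J) (L : list J) (A : J -> I -> R) (b y : I -> R).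
Hypotheses (Hy : forall j, In j L -> 0 <= dot y (A j)) (Hyb : dot y b < 0) (Hy0 : dot y (A j0) < 0).

Lemma cone_of_projected_cone : ~ In j0 L ->
  cone L (fun j => project y (A j0) (A j)) (project y (A j0) b) -> cone (j0 :: L) A b.
Proof.
  intros Hj0 [lam [Hl Hb]].
  set (ya := dot y (A j0)) in *.
  set (S2 := sumL L (fun j => lam j * dot y (A j))).
  assert (HS2 : 0 <= S2) by (apply sumL_nonneg; intros j Hj; apply Rmult_le_pos; auto).
  apply (cone_cons j0 L A b ((dot y b - S2) / ya) lam Hj0); [|exact Hl|].
  - unfold Rdiv. assert (/ ya < 0) by (apply Rinv_lt_0_compat; exact Hy0). nra.
  - intros i Hi. specialize (Hb i Hi). unfold project in Hb. fold ya in Hb.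
    rewrite (sumL_ext L _ (fun j => ya * (lam j * A j i) - A j0 i * (lam j * dot y (A j)))),
      sumL_minus, !sumL_scal_l in Hb by (intros; ring).
    fold S2 in Hb. field_simplify_eq; [lra | exact (Rlt_not_eq _ _ Hy0)].
Qed.

Lemma separable_of_projected_separable :
  separable L (fun j => project y (A j0) (A j)) (project y (A j0) b) -> separable (j0 :: L) A b.
Proof.
  intros [z [Hz Hzb]]. unfold project in Hz, Hzb.
  exists (fun i => dot y (A j0) * z i - dot z (A j0) * y i). split.
  - intros j [<-|Hj]; rewrite dot_combl; [lra|].
    specialize (Hz j Hj). rewrite dot_combr in Hz. lra.
  - rewrite dot_combl. rewrite dot_combr in Hzb. lra.
Qed.

End Elimination.

Lemma farkas (L : list J) : NoDup L -> forall A b, cone L A b \/ separable L A b.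
Proof.
  induction L as [|j0 L IH]; intros HN A b; [apply farkas_nil|].
  inversion HN as [|? ? Hj0 HN']; subst.
  destruct (IH HN' A b) as [[lam [Hl Hb]]|[y [Hy Hyb]]].
  - left. apply (cone_cons j0 L A b 0 lam Hj0 (Rle_refl 0) Hl).
    intros i Hi. rewrite Hb by exact Hi. ring.
  - destruct (Rle_lt_dec 0 (dot y (A j0))) as [Hya|Hya].
    + right. exists y. split; [intros j [<-|Hj]; auto | exact Hyb].
    + destruct (IH HN' (fun j => project y (A j0) (A j)) (project y (A j0) b)) as [Hc|Hs].
      * left. exact (cone_of_projected_cone j0 L A b y Hy Hyb Hya Hj0 Hc).
      * right. exact (separable_of_projected_separable j0 L A b y Hs).
Qed.

End Farkas.

(** * Kantorovich duality for finitely supported measures *)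

Lemma Rmin_dist a b a' b' k :
  Rabs (a - a') <= k -> Rabs (b - b') <= k -> Rabs (Rmin a b - Rmin a' b') <= k.
Proof.
  intros Ha Hb. apply Rabs_le_between in Ha, Hb. apply Rabs_le.
  unfold Rmin; destruct (Rle_dec a b), (Rle_dec a' b'); lra.
Qed.

Definition minL {A : Type} (l : list A) (F : A -> R) (M : R) : R :=
  fold_right (fun a m => Rmin (F a) m) M l.

Lemma minL_le {A : Type} (l : list A) F M a : In a l -> minL l F M <= F a.
Proof.
  induction l as [|b l IH]; simpl; intros Ha; [destruct Ha|].
  destruct Ha as [->|Ha]; [apply Rmin_l | eapply Rle_trans; [apply Rmin_r | exact (IH Ha)]].
Qed.

Lemma minL_glb {A : Type} (l : list A) F M c :
  (forall a, In a l -> c <= F a) -> c <= M -> c <= minL l F M.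
Proof.
  induction l as [|b l IH]; simpl; intros H HM; [exact HM|].
  apply Rmin_glb; [apply H; left; reflexivity|].
  apply IH; [intros a Ha; apply H; right |]; assumption.
Qed.

Lemma minL_dist {A : Type} (l : list A) F G M k :
  0 <= k -> (forall a, Rabs (F a - G a) <= k) -> Rabs (minL l F M - minL l G M) <= k.
Proof.
  intros Hk H. induction l as [|b l IH]; simpl; [rewrite Rminus_diag, Rabs_R0; exact Hk|].
  apply Rmin_dist; [apply H | exact IH].
Qed.

Lemma is_glb_Rbar_real (E : R -> Prop) c m :
  E c -> (forall c', E c' -> m <= c') -> is_glb_Rbar E (real (Glb_Rbar E)).
Proof.
  intros Hc Hm. pose proof (Glb_Rbar_correct E) as Hglb.
  assert (Hle : Rbar_le (Glb_Rbar E) c) by (apply Hglb, Hc).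
  assert (Hge : Rbar_le m (Glb_Rbar E)) by (apply Hglb; intros z Hz; apply Hm, Hz).
  destruct (Glb_Rbar E); simpl in *; easy.
Qed.

Definition lipschitz_on {V : Type} (d : V -> V -> R) (S : list V) (h : V -> R) : Prop :=
  forall u v, In u S -> In v S -> Rabs (h u - h v) <= d u v.

Section Metric.
Variables (V : Type) (d : V -> V -> R).
Hypothesis Hd : is_metric d.

Lemma dist_refl u : d u u = 0.
Proof. apply (proj1 (proj2 Hd)); reflexivity. Qed.

Lemma dist_sym u v : d u v = d v u.
Proof. apply Hd. Qed.

Lemma dist_pos u v : u <> v -> 0 < d u v.
Proof.
  intros Huv. destruct Hd as (H0 & Heq & _). destruct (H0 u v) as [|E]; [assumption|].
  exfalso; apply Huv, Heq; symmetry; exact E.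
Qed.

Lemma dist_lipschitz w u v : Rabs (d w u - d w v) <= d u v.
Proof.
  destruct Hd as (_ & _ & Hsym & Htri). apply Rabs_le.
  pose proof (Htri w v u). pose proof (Htri w u v). rewrite (Hsym v u) in *. lra.
Qed.

Lemma lipschitz_on_dist S w : lipschitz_on d S (d w).
Proof. intros u v _ _; apply dist_lipschitz. Qed.

(* McShane extension [h v = min_u (d u v + f u)]. *)
Lemma lipschitz_between (S : list V) (f g : V -> R) :
  (forall u v, In u S -> In v S -> 0 <= d u v + f u + g v) ->
  exists h, lipschitz_on d S h /\ forall v, In v S -> - g v <= h v <= f v.
Proof.
  intros Hfg. set (M := sumL S (fun v => Rabs (g v))).
  exists (fun v => minL S (fun u => d u v + f u) M). split.
  - intros v v' _ _. apply minL_dist; [apply Hd|]. intros u.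
    replace (d u v + f u - (d u v' + f u)) with (d u v - d u v') by ring. apply dist_lipschitz.
  - intros v Hv. split.
    + apply minL_glb; [intros u Hu; specialize (Hfg u v Hu Hv); lra|].
      eapply Rle_trans; [apply Rle_abs|]. rewrite Rabs_Ropp.
      apply (sumL_ge_single S (fun v => Rabs (g v))); [exact Hv | intros; apply Rabs_pos].
    + pose proof (minL_le S (fun u => d u v + f u) M v Hv) as H.
      simpl in H. rewrite dist_refl, Rplus_0_l in H. exact H.
Qed.

End Metric.

Lemma NoDup_list_prod {A B : Type} (l1 : list A) (l2 : list B) :
  NoDup l1 -> NoDup l2 -> NoDup (list_prod l1 l2).
Proof.
  induction l1 as [|a l1 IH]; intros H1 H2; simpl; [constructor|].
  inversion H1; subst. apply NoDup_app; auto.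
  - apply FinFun.Injective_map_NoDup; [intros u v E; inversion E; reflexivity | exact H2].
  - intros p Hp Hp'. apply in_map_iff in Hp as [b [<- _]]. apply in_prod_iff in Hp'. tauto.
Qed.

(* The transport problem as a linear system: a column [Some (u, v)] carries the mass
   of [pi u v], the column [None] is a slack variable for the cost constraint, and the
   rows are the cost constraint [None] and the two marginal constraints. *)
Section TransportLP.
Variables (V : Type) (d : V -> V -> R) (S : list V) (m1 m2 : V -> R) (c0 : R).
Hypothesis HS : NoDup S.

Definition tp_rows : list (option (V + V)) :=
  None :: map (fun u => Some (inl u)) S ++ map (fun v => Some (inr v)) S.

Definition tp_cols : list (option (V * V)) := None :: map Some (list_prod S S).

Definition tp_matrix (j : option (V * V)) (i : option (V + V)) : R :=
  match j, i with
  | None, None => 1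
  | None, Some _ => 0
  | Some (u, v), None => d u v
  | Some (u, v), Some (inl w) => if Vdec u w then 1 else 0
  | Some (u, v), Some (inr w) => if Vdec v w then 1 else 0
  end.

Definition tp_rhs (i : option (V + V)) : R :=
  match i with None => c0 | Some (inl w) => m1 w | Some (inr w) => m2 w end.

Lemma tp_dot y a : dot _ tp_rows y a = y None * a None +
  sumL S (fun u => y (Some (inl u)) * a (Some (inl u))) +
  sumL S (fun v => y (Some (inr v)) * a (Some (inr v))).
Proof. unfold dot, tp_rows. simpl. rewrite sumL_app, !sumL_map. ring. Qed.

Lemma tp_cols_sum F : sumL tp_cols F = F None + sumL S (fun u => sumL S (fun v => F (Some (u, v)))).
Proof. unfold tp_cols. simpl. rewrite sumL_map, sumL_prod. reflexivity. Qed.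

Lemma tp_cols_nodup : NoDup tp_cols.
Proof.
  constructor.
  - intros H. apply in_map_iff in H as [? [H _]]; discriminate.
  - apply FinFun.Injective_map_NoDup; [intros p p' E; inversion E; reflexivity|].
    apply NoDup_list_prod; exact HS.
Qed.

Lemma coupling_of_tp_cone : cone _ _ tp_rows tp_cols tp_matrix tp_rhs ->
  exists pi : V -> V -> R, (forall u v, In u S -> In v S -> 0 <= pi u v) /\
    (forall u, In u S -> sumL S (pi u) = m1 u) /\
    (forall v, In v S -> sumL S (fun u => pi u v) = m2 v) /\
    sumL S (fun u => sumL S (fun v => pi u v * d u v)) <= c0.
Proof.
  intros [lam [Hl Hb]]. exists (fun u v => lam (Some (u, v))).
  assert (Hpi : forall u v, In u S -> In v S -> 0 <= lam (Some (u, v))).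
  { intros u v Hu Hv. apply Hl. right. apply in_map, in_prod; assumption. }
  split; [exact Hpi | split; [|split]].
  - intros w Hw. assert (Hi : In (Some (inl w)) tp_rows).
    { right. apply in_or_app. left. apply in_map_iff. exists w. split; [reflexivity | exact Hw]. }
    change (m1 w) with (tp_rhs (Some (inl w))). rewrite (Hb _ Hi), tp_cols_sum. simpl.
    rewrite (sumL_ext S (fun u => sumL S (fun v => lam (Some (u, v)) * (if Vdec u w then 1 else 0)))
      (fun u => sumL S (fun v => lam (Some (u, v))) * (if Vdec u w then 1 else 0))).
    + rewrite sumL_indicator by assumption. ring.
    + intros u _. rewrite <- sumL_scal_r. reflexivity.
  - intros w Hw. assert (Hi : In (Some (inr w)) tp_rows).
    { right. apply in_or_app. right. apply in_map_iff. exists w. split; [reflexivity | exact Hw]. }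
    change (m2 w) with (tp_rhs (Some (inr w))). rewrite (Hb _ Hi), tp_cols_sum. simpl.
    rewrite Rmult_0_r, Rplus_0_l. apply sumL_ext. intros u _.
    symmetry; apply (sumL_indicator S w (fun v => lam (Some (u, v))) HS Hw).
  - assert (Hi : In None tp_rows) by (left; reflexivity).
    specialize (Hb _ Hi). rewrite tp_cols_sum in Hb. simpl in Hb.
    assert (0 <= lam None) by (apply Hl; left; reflexivity). lra.
Qed.

Lemma potentials_of_tp_separable : separable _ _ tp_rows tp_cols tp_matrix tp_rhs ->
  exists t (f g : V -> R), 0 <= t /\
    (forall u v, In u S -> In v S -> 0 <= t * d u v + f u + g v) /\
    t * c0 + sumL S (fun u => f u * m1 u) + sumL S (fun v => g v * m2 v) < 0.
Proof.
  intros [y [Hy Hyb]].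
  exists (y None), (fun u => y (Some (inl u))), (fun v => y (Some (inr v))). split; [|split].
  - specialize (Hy None (or_introl eq_refl)). rewrite tp_dot in Hy. simpl in Hy.
    rewrite !sumL_eq0 in Hy by (intros; ring). lra.
  - intros u v Hu Hv.
    assert (Hj : In (Some (u, v)) tp_cols) by (right; apply in_map, in_prod; assumption).
    specialize (Hy _ Hj). rewrite tp_dot in Hy. simpl in Hy.
    rewrite !sumL_indicator_sym in Hy by assumption. lra.
  - rewrite tp_dot in Hyb. exact Hyb.
Qed.

End TransportLP.

Section Wasserstein.
Variables (V : Type) (d : V -> V -> R).
Hypothesis Hd : is_metric d.
Variables (S : list V) (m1 m2 : V -> R).
Hypotheses (Hm1 : forall u, In u S -> 0 <= m1 u) (Hm2 : forall v, In v S -> 0 <= m2 v)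
  (Hs1 : lsum S m1 = 1) (Hs2 : lsum S m2 = 1).

Let cost (pi : V -> V -> R) : R := lsum S (fun u => lsum S (fun v => pi u v * d u v)).
Let costs (c : R) : Prop := exists pi, coupling S m1 m2 pi /\ c = cost pi.

Lemma dual_le_cost pi h : coupling S m1 m2 pi -> lipschitz_on d S h ->
  lsum S (fun w => h w * (m2 w - m1 w)) <= cost pi.
Proof.
  intros [Hpi [Hp1 Hp2]] Hh. unfold cost. rewrite !lsum_sumL.
  rewrite (sumL_ext _ (fun u => lsum S _) (fun u => sumL (nodup Vdec S) (fun v => pi u v * d u v)))
    by (intros; apply lsum_sumL).
  transitivity (sumL (nodup Vdec S) (fun u => sumL (nodup Vdec S) (fun v => pi u v * (h v - h u)))).
  - right. rewrite (sumL_ext _ (fun u => sumL _ (fun v => pi u v * (h v - h u)))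
      (fun u => sumL (nodup Vdec S) (fun v => h v * pi u v) - h u * sumL (nodup Vdec S) (pi u)))
      by (intros; rewrite <- sumL_scal_l, <- sumL_minus; apply sumL_ext; intros; ring).
    rewrite sumL_minus, sumL_swap, <- sumL_minus. apply sumL_ext. intros w Hw.
    apply nodup_In in Hw. rewrite sumL_scal_l, <- !lsum_sumL, Hp1, Hp2 by exact Hw. ring.
  - apply sumL_le. intros u Hu. apply sumL_le. intros v Hv. apply nodup_In in Hu, Hv.
    apply Rmult_le_compat_l; [apply Hpi; assumption|].
    eapply Rle_trans; [apply Rle_abs|]. rewrite Rabs_minus_sym. apply Hh; assumption.
Qed.

Lemma coupling_product : coupling S m1 m2 (fun u v => m1 u * m2 v).
Proof.
  split; [|split].
  - intros u v Hu Hv. apply Rmult_le_pos; auto.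
  - intros u _. rewrite lsum_sumL, sumL_scal_l, <- lsum_sumL, Hs2. ring.
  - intros v _. rewrite lsum_sumL, sumL_scal_r, <- lsum_sumL, Hs1. ring.
Qed.

Lemma cost_nonneg pi : coupling S m1 m2 pi -> 0 <= cost pi.
Proof.
  intros [Hpi _]. unfold cost. rewrite lsum_sumL. apply sumL_nonneg. intros u Hu.
  rewrite lsum_sumL. apply sumL_nonneg. intros v Hv. apply nodup_In in Hu, Hv.
  apply Rmult_le_pos; [apply Hpi; assumption | apply Hd].
Qed.

Lemma W1_is_glb : is_glb_Rbar costs (W1 d S m1 m2).
Proof.
  apply (is_glb_Rbar_real costs (cost (fun u v => m1 u * m2 v)) 0).
  - exists (fun u v => m1 u * m2 v). split; [exact coupling_product | reflexivity].
  - intros c [pi [Hpi ->]]. apply cost_nonneg, Hpi.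
Qed.

Lemma dual_le_W1 h : lipschitz_on d S h -> lsum S (fun w => h w * (m2 w - m1 w)) <= W1 d S m1 m2.
Proof.
  intros Hh. apply (proj2 W1_is_glb (lsum S (fun w => h w * (m2 w - m1 w)))).
  intros c [pi [Hpi ->]]. apply dual_le_cost; assumption.
Qed.

Section DualBound.
Variable c0 : R.
Hypothesis Hc0 : forall h, lipschitz_on d S h -> lsum S (fun w => h w * (m2 w - m1 w)) <= c0.

Lemma dual_potentials_nonneg t f g : 0 <= t ->
  (forall u v, In u S -> In v S -> 0 <= t * d u v + f u + g v) ->
  0 <= t * c0 + lsum S (fun u => f u * m1 u) + lsum S (fun v => g v * m2 v).
Proof.
  intros [Ht|<-] Hfg.
  - destruct (lipschitz_between V d Hd S (fun u => f u / t) (fun v => g v / t))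
      as [h [Hh Hbetween]].
    { intros u v Hu Hv. specialize (Hfg u v Hu Hv).
      replace (d u v + f u / t + g v / t) with ((t * d u v + f u + g v) / t) by (field; lra).
      apply Rdiv_le_0_compat; assumption. }
    specialize (Hc0 h Hh). rewrite lsum_sumL in Hc0 |- *. rewrite lsum_sumL.
    assert (Hmass : sumL (nodup Vdec S) (fun w => (- g w / t) * m2 w - (f w / t) * m1 w) <=
                    sumL (nodup Vdec S) (fun w => h w * (m2 w - m1 w))).
    { apply sumL_le. intros w Hw. apply nodup_In in Hw. specialize (Hbetween w Hw).
      pose proof (Hm1 w Hw). pose proof (Hm2 w Hw).
      assert (- g w / t * m2 w <= h w * m2 w) by (apply Rmult_le_compat_r; lra).
      assert (h w * m1 w <= f w / t * m1 w) by (apply Rmult_le_compat_r; lra). lra. }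
    rewrite (sumL_ext _ _ (fun w => (- / t) * (f w * m1 w + g w * m2 w))), sumL_scal_l, sumL_plus
      in Hmass by (intros; field; lra).
    apply Rmult_le_reg_l with (/ t); [apply Rinv_0_lt_compat, Ht|].
    rewrite Rmult_0_r, Rmult_plus_distr_l, Rmult_plus_distr_l, <- Rmult_assoc, Rinv_l by lra. lra.
  - rewrite !lsum_sumL in *. set (S' := nodup Vdec S) in *.
    assert (Hprod : sumL S' (fun u => f u * m1 u) + sumL S' (fun v => g v * m2 v) =
      sumL S' (fun u => sumL S' (fun v => (f u + g v) * (m1 u * m2 v)))).
    { rewrite (sumL_ext S' (fun u => sumL S' _)
        (fun u => f u * m1 u * sumL S' m2 + sumL S' (fun v => g v * m2 v) * m1 u)).
      - rewrite sumL_plus, sumL_scal_r, sumL_scal_l, Hs1, Hs2. ring.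
      - intros u _. rewrite <- sumL_scal_l, <- sumL_scal_r, <- sumL_plus.
        apply sumL_ext; intros; ring. }
    rewrite Rmult_0_l, Rplus_0_l, Hprod.
    apply sumL_nonneg. intros u Hu. apply sumL_nonneg. intros v Hv.
    apply nodup_In in Hu, Hv. specialize (Hfg u v Hu Hv).
    apply Rmult_le_pos; [lra | apply Rmult_le_pos; auto].
Qed.

(* By Farkas' lemma, either a coupling of cost at most [c0] exists or there are dual
   potentials, which [dual_potentials_nonneg] rules out. *)
Lemma W1_le_of_dual_bound : W1 d S m1 m2 <= c0.
Proof.
  set (S' := nodup Vdec S). assert (HS' : NoDup S') by apply NoDup_nodup.
  destruct (farkas _ _ (tp_rows V S') (tp_cols V S') (tp_cols_nodup V S' HS') (tp_matrix V d)
              (tp_rhs V m1 m2 c0)) as [Hcone|Hsep].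
  - destruct (coupling_of_tp_cone V d S' m1 m2 c0 HS' Hcone) as [pi [Hpi [Hp1 [Hp2 Hcost]]]].
    apply Rle_trans with (cost pi); [apply (proj1 W1_is_glb); exists pi; split; [|reflexivity]|].
    + split; [|split].
      * intros u v Hu Hv. apply Hpi; apply nodup_In; assumption.
      * intros u Hu. rewrite lsum_sumL. apply Hp1, nodup_In, Hu.
      * intros v Hv. rewrite lsum_sumL. apply Hp2, nodup_In, Hv.
    + unfold cost. rewrite lsum_sumL. erewrite sumL_ext; [exact Hcost|]. intros; apply lsum_sumL.
  - exfalso.
    destruct (potentials_of_tp_separable V d S' m1 m2 c0 HS' Hsep) as (t & f & g & Ht & Hfg & Hneg).
    assert (H := dual_potentials_nonneg t f g Ht).
    rewrite !lsum_sumL in H. fold S' in H.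
    enough (0 <= t * c0 + sumL S' (fun u => f u * m1 u) + sumL S' (fun v => g v * m2 v)) by lra.
    apply H. intros u v Hu Hv. apply Hfg; apply nodup_In; assumption.
Qed.

End DualBound.
End Wasserstein.

(** * Right derivatives and limits at 0+ *)

Lemma ex_pseries_CV_radius (c : nat -> R) (s : R) :
  ex_pseries c s -> Rbar_le (Rabs s) (CV_radius c).
Proof.
  intros Hs. apply Rbar_not_lt_le. intros Hlt. apply (CV_disk_outside c s Hlt).
  apply ex_series_lim_0 in Hs. eapply is_lim_seq_ext; [|exact Hs].
  intros n. simpl. rewrite pow_n_pow. unfold scal; simpl; unfold mult; simpl. ring.
Qed.

Lemma analytic_on_ex_derive (g : R -> R) (a b t : R) :
  analytic_on g a b -> a < t < b -> ex_derive g t.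
Proof.
  intros Han Ht. destruct (Han t Ht) as [c [r [Hr Hser]]].
  assert (Hrad : Rbar_lt (Rabs 0) (CV_radius c)).
  { apply Rbar_lt_le_trans with (Rabs (r / 2)).
    - rewrite Rabs_R0, Rabs_pos_eq by lra. simpl. lra.
    - apply ex_pseries_CV_radius. exists (g (t + r / 2)).
      assert (Hs : Rabs (t + r / 2 - t) < r) by (replace (t + r / 2 - t) with (r / 2) by ring;
        rewrite Rabs_pos_eq; lra).
      pose proof (Hser _ Hs) as H. replace (t + r / 2 - t) with (r / 2) in H by ring. exact H. }
  exists (scal 1 (PSeries (PS_derive c) 0)).
  apply is_derive_ext_loc with (fun s => PSeries c (s - t)).
  - exists (mkposreal r Hr). intros s Hs. apply is_pseries_unique, Hser, Hs.
  - apply (is_derive_comp (PSeries c) (fun s => s - t)).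
    + rewrite Rminus_diag. apply is_derive_PSeries, Hrad.
    + auto_derive; [exact I | ring].
Qed.

Lemma has_rderiv0_of_is_derive (f g : R -> R) (l : R) :
  is_derive g 0 l -> (forall e, 0 <= e <= 1 -> g e = f e) -> has_rderiv0 f l.
Proof.
  intros Hg Hgf. apply is_derive_Reals in Hg. apply filterlim_locally. intros eps.
  destruct (Hg eps (cond_pos eps)) as [del Hdel].
  assert (Hm : 0 < Rmin del 1) by (apply Rmin_glb_lt; [apply cond_pos | lra]).
  exists (mkposreal _ Hm). intros e He He0. simpl in He.
  change (Rabs (e - 0) < Rmin del 1) in He. rewrite Rminus_0_r, Rabs_pos_eq in He by lra.
  pose proof (Rmin_l del 1). pose proof (Rmin_r del 1).
  specialize (Hdel e ltac:(lra) ltac:(rewrite Rabs_pos_eq; lra)).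
  change (Rabs ((f e - f 0) / e - l) < eps).
  rewrite <- (Hgf e), <- (Hgf 0), <- (Rplus_0_l e) at 1 by lra. exact Hdel.
Qed.

Lemma filterlim_Rminus {T : Type} {F : (T -> Prop) -> Prop} {FF : Filter F}
  (f g : T -> R) (a b : R) :
  filterlim f F (locally a) -> filterlim g F (locally b) ->
  filterlim (fun t => f t - g t) F (locally (a - b)).
Proof.
  intros Hf Hg. eapply (filterlim_comp_2 f (fun t => - g t) Rplus Hf).
  - exact (filterlim_comp _ _ _ g Ropp F (locally b) (locally (- b)) Hg (filterlim_opp b)).
  - exact (filterlim_plus a (- b)).
Qed.

Lemma at_right_0_le (c : R) : 0 < c -> at_right 0 (fun e => 0 < e <= c).
Proof.
  intros Hc. exists (mkposreal c Hc). intros e He He0. split; [exact He0|].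
  change (Rabs (e - 0) < c) in He. rewrite Rminus_0_r, Rabs_pos_eq in He; lra.
Qed.

Lemma at_right_0_lim_unique (f : R -> R) (l c : R) :
  filterlim f (at_right 0) (locally l) -> (forall e, 0 < e <= 1 -> f e = c) -> l = c.
Proof.
  intros Hf Hc. apply (@filterlim_locally_unique R R_AbsRing R_NormedModule (at_right 0)
    (Proper_StrongProper _ (at_right_proper_filter 0)) f l c Hf).
  apply filterlim_ext_loc with (fun _ => c); [|apply filterlim_const].
  eapply filter_imp; [|apply (at_right_0_le 1 Rlt_0_1)]. intros e He. symmetry. apply Hc, He.
Qed.

Lemma filterlim_glb_sandwich {T : Type} {F : (T -> Prop) -> Prop} {FF : Filter F}
  (E : R -> Prop) (k : R) (g r : T -> R) :
  is_glb_Rbar E k -> filterlim r F (locally 0) ->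
  F (fun t => forall c, E c -> k - r t <= g t <= c + r t) -> filterlim g F (locally k).
Proof.
  intros Hk Hr Hsw. apply filterlim_locally. intros eps.
  assert (Hc : exists c, E c /\ c < k + eps / 2).
  { apply not_all_not_ex. intros Hno.
    assert (Hle : Rbar_le (k + eps / 2) k).
    { apply Hk. intros c Hc. apply Rnot_lt_le. intros Hlt. apply (Hno c). split; assumption. }
    simpl in Hle. pose proof (cond_pos eps). lra. }
  destruct Hc as [c [Hc Hck]].
  pose proof (proj1 (filterlim_locally (F := F) r 0) Hr (pos_div_2 eps)) as Hr'.
  eapply filter_imp; [|exact (filter_and _ _ Hr' Hsw)]. intros t [Hrt Hgt].
  specialize (Hgt c Hc). change (Rabs (r t - 0) < eps / 2) in Hrt. change (Rabs (g t - k) < eps).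
  rewrite Rminus_0_r in Hrt. apply Rabs_lt_between in Hrt. apply Rabs_def1; lra.
Qed.

(** * Curvature of a time-analytic local random walk *)

Section RandomWalk.
Variables (V : Type) (mu : V -> R -> V -> R) (K : V -> list V).
Hypotheses (Hrw : local_random_walk mu K) (Hta : time_analytic mu).

Definition rate (z w : V) : R := rderiv0 (fun e => mu z e w).
Definition diff_quot (e : R) (z w : V) : R := (mu z e w - mu z 0 w) / e.

Lemma rate_spec z w : filterlim (fun e => diff_quot e z w) (at_right 0) (locally (rate z w)).
Proof.
  destruct (Hta z w) as [delta [Hdelta [g [Hg Han]]]].
  destruct (analytic_on_ex_derive g _ _ 0 Han ltac:(lra)) as [l Hl].
  apply (epsilon_spec (inhabits 0) (has_rderiv0 (fun e => mu z e w))).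
  exists l. exact (has_rderiv0_of_is_derive _ g l Hl Hg).
Qed.

Lemma mu_at0 z w : mu z 0 w = if Vdec w z then 1 else 0.
Proof. apply Hrw. Qed.

Lemma mu_out z e w : 0 <= e <= 1 -> ~ In w (K z) -> mu z e w = 0.
Proof.
  intros He Hw. destruct (Req_dec (mu z e w) 0) as [|Hne]; [assumption|].
  exfalso. apply Hw, (proj1 (proj2 Hrw) z e w He Hne).
Qed.

Lemma In_K_self z : In z (K z).
Proof.
  apply (proj1 (proj2 Hrw) z 0 z); [lra|]. rewrite mu_at0.
  destruct (Vdec z z); [exact R1_neq_R0 | contradiction].
Qed.

Lemma rate_out z w : ~ In w (K z) -> rate z w = 0.
Proof.
  intros Hw. apply (at_right_0_lim_unique _ _ _ (rate_spec z w)). intros e He.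
  unfold diff_quot. rewrite !mu_out by (assumption || lra). field. lra.
Qed.

Lemma sum_rate z : sumL (nodup Vdec (K z)) (rate z) = 0.
Proof.
  apply (at_right_0_lim_unique _ _ _
    (filterlim_sumL _ (fun w e => diff_quot e z w) (rate z) (fun w _ => rate_spec z w))).
  intros e He. unfold diff_quot.
  rewrite (sumL_ext _ _ (fun w => / e * (mu z e w - mu z 0 w))) by (intros; unfold Rdiv; ring).
  rewrite sumL_scal_l, sumL_minus, <- !lsum_sumL, !(proj1 (proj2 (proj2 Hrw))) by lra. ring.
Qed.

Lemma sumL_over_K S z F : NoDup S -> incl (K z) S -> (forall w, ~ In w (K z) -> F w = 0) ->
  sumL S F = lsum (K z) F.
Proof.
  intros HS HKS HF. rewrite lsum_sumL. apply sumL_incl.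
  - apply NoDup_nodup.
  - exact HS.
  - intros w Hw. apply HKS, (nodup_In Vdec), Hw.
  - intros w _ Hw. apply HF. intros Hw'. apply Hw, nodup_In, Hw'.
Qed.

Lemma sum_mu_over S z e : NoDup S -> incl (K z) S -> 0 <= e <= 1 -> sumL S (mu z e) = 1.
Proof.
  intros HS HKS He. rewrite (sumL_over_K S z) by (auto using mu_out). apply Hrw, He.
Qed.

Lemma Lap_over S f z c : NoDup S -> incl (K z) S ->
  Lap mu K f z = sumL S (fun w => (f w - c) * rate z w).
Proof.
  intros HS HKS.
  rewrite (sumL_over_K S z)
    by first [assumption | intros w Hw; rewrite rate_out; [ring | exact Hw]].
  unfold Lap. rewrite !lsum_sumL.
  rewrite (sumL_ext _ (fun w => (f w - c) * rate z w)
    (fun w => (f w - f z) * rate z w + (f z - c) * rate z w)) by (intros; ring).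
  rewrite sumL_plus, sumL_scal_l, sum_rate, Rmult_0_r, Rplus_0_r.
  apply sumL_ext. intros w _. destruct (Vdec w z) as [->|]; unfold rate; ring.
Qed.

Section Pair.
Variable d : V -> V -> R.
Hypothesis Hd : is_metric d.
Variables x y : V.
Hypothesis Hxy : x <> y.

Let S := nodup Vdec (Kxy K x y).
Let D := d x y.

Lemma S_nodup : NoDup S.
Proof. apply NoDup_nodup. Qed.

Lemma incl_K_S z : z = x \/ z = y -> incl (K z) S.
Proof.
  intros Hz w Hw. apply nodup_In. unfold Kxy. apply in_or_app.
  destruct Hz as [->| ->]; [left | right]; exact Hw.
Qed.

Lemma x_in_Kxy : In x (Kxy K x y).
Proof. apply in_or_app. left. apply In_K_self. Qed.

Lemma y_in_Kxy : In y (Kxy K x y).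
Proof. apply in_or_app. right. apply In_K_self. Qed.

Let spread := sumL S (fun w => Rabs (rate y w - rate x w)).

Lemma Lap_gap f :
  Lap mu K f y - Lap mu K f x = sumL S (fun w => (f w - f x) * (rate y w - rate x w)).
Proof.
  rewrite (Lap_over S f y (f x)), (Lap_over S f x (f x)), <- sumL_minus
    by (apply S_nodup || (apply incl_K_S; auto)).
  apply sumL_ext; intros; ring.
Qed.

Definition err (e : R) : R :=
  sumL S (fun w => d x w * Rabs (diff_quot e y w - diff_quot e x w - (rate y w - rate x w))).

Lemma err_lim : filterlim (fun e => err e / D) (at_right 0) (locally 0).
Proof.
  set (a w := rate y w - rate x w).
  assert (Hterm : forall w, filterlim
    (fun e => d x w * Rabs (diff_quot e y w - diff_quot e x w - a w)) (at_right 0)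
    (locally (d x w * Rabs (a w - a w)))).
  { intros w.
    apply (filterlim_comp _ _ _ _ (fun r => d x w * r) _ (locally (Rabs (a w - a w))));
      [|exact (@filterlim_scal_r R_AbsRing R_NormedModule (d x w) (Rabs (a w - a w)))].
    apply (filterlim_comp _ _ _ _ Rabs _ (locally (a w - a w))); [|apply continuous_Rabs].
    apply filterlim_Rminus; [apply filterlim_Rminus; apply rate_spec | apply filterlim_const]. }
  pose proof (filterlim_sumL S _ _ (fun w _ => Hterm w)) as Hsum.
  rewrite sumL_eq0 in Hsum by (intros; rewrite Rminus_diag, Rabs_R0; ring).
  pose proof (filterlim_comp _ _ _ err (fun r => / D * r) _ _ _ Hsum
    (@filterlim_scal_r R_AbsRing R_NormedModule (/ D) 0)) as H.
  change (scal (/ D) 0) with (/ D * 0) in H. rewrite Rmult_0_r in H.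
  eapply filterlim_ext; [intros e; apply Rmult_comm | exact H].
Qed.

Lemma dual_expansion e h : 0 < e <= 1 -> lipschitz_on d (Kxy K x y) h ->
  Rabs (lsum (Kxy K x y) (fun w => h w * (mu y e w - mu x e w)) - (h y - h x)
        - e * (Lap mu K h y - Lap mu K h x)) <= e * err e.
Proof.
  intros He Hh. rewrite lsum_sumL, Lap_gap. fold S.
  assert (Hsum : forall z, z = x \/ z = y -> sumL S (mu z e) = 1).
  { intros z Hz. apply sum_mu_over; [exact S_nodup | apply incl_K_S, Hz | lra]. }
  assert (HxS : In x S) by apply nodup_In, x_in_Kxy.
  assert (HyS : In y S) by apply nodup_In, y_in_Kxy.
  assert (Hmu : forall z w, mu z e w = (if Vdec w z then 1 else 0) + e * diff_quot e z w).
  { intros z w. unfold diff_quot. rewrite <- mu_at0. field. lra. }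
  set (r w := diff_quot e y w - diff_quot e x w - (rate y w - rate x w)).
  assert (Hid : sumL S (fun w => h w * (mu y e w - mu x e w)) - (h y - h x)
      - e * sumL S (fun w => (h w - h x) * (rate y w - rate x w))
      = e * sumL S (fun w => (h w - h x) * r w)).
  { rewrite (sumL_ext S (fun w => h w * _) (fun w =>
        (h w - h x) * (if Vdec w y then 1 else 0) - (h w - h x) * (if Vdec w x then 1 else 0)
        + e * ((h w - h x) * r w + (h w - h x) * (rate y w - rate x w))
        + h x * (mu y e w - mu x e w)))
      by (intros w _; unfold r; rewrite (Hmu y w), (Hmu x w); ring).
    rewrite !sumL_plus, sumL_minus, !sumL_indicator, !sumL_scal_l, sumL_plus, sumL_minus,
      Hsum, Hsum by (auto using S_nodup). ring. }
  rewrite Hid, Rabs_mult, Rabs_pos_eq by lra. apply Rmult_le_compat_l; [lra|].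
  eapply Rle_trans; [apply sumL_abs|]. apply sumL_le. intros w Hw. rewrite Rabs_mult.
  apply Rmult_le_compat_r; [apply Rabs_pos|]. rewrite (dist_sym V d Hd x w).
  apply nodup_In in Hw. apply Hh; [exact Hw | exact x_in_Kxy].
Qed.

Definition ric_set (c : R) : Prop := exists f : V -> R,
  lipschitz_on d (Kxy K x y) f /\ grad d x y f = 1 /\ c = grad d y x (Lap mu K f).

Lemma D_pos : 0 < D.
Proof. apply (dist_pos V d Hd x y Hxy). Qed.

Lemma ric_set_dist : ric_set (grad d y x (Lap mu K (d x))).
Proof.
  exists (d x). split; [apply lipschitz_on_dist, Hd | split; [|reflexivity]].
  unfold grad. rewrite (dist_refl V d Hd x). fold D. pose proof D_pos. field. lra.
Qed.

Lemma ric_set_lower c :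
  ric_set c -> - sumL S (fun w => d x w * Rabs (rate y w - rate x w)) / D <= c.
Proof.
  intros [f [Hf [_ ->]]]. unfold grad. rewrite (dist_sym V d Hd y x). fold D.
  unfold Rdiv. apply Rmult_le_compat_r; [left; apply Rinv_0_lt_compat, D_pos|].
  enough (Lap mu K f y - Lap mu K f x <= sumL S (fun w => d x w * Rabs (rate y w - rate x w)))
    by lra.
  rewrite Lap_gap. apply sumL_le. intros w Hw. eapply Rle_trans; [apply Rle_abs|].
  rewrite Rabs_mult. apply Rmult_le_compat_r; [apply Rabs_pos|].
  rewrite (dist_sym V d Hd x w). apply nodup_In in Hw. apply Hf; [exact Hw | exact x_in_Kxy].
Qed.

Definition ric : R := real (Glb_Rbar ric_set).

Lemma ric_is_glb : is_glb_Rbar ric_set ric.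
Proof. exact (is_glb_Rbar_real ric_set _ _ ric_set_dist ric_set_lower). Qed.

Lemma ric_le c : ric_set c -> ric <= c.
Proof. intros Hc. exact (proj1 ric_is_glb c Hc). Qed.

Definition truncate (h : V -> R) (w : V) : R := Rmin (h w - h x + (D - (h y - h x))) (d x w).

Section Truncation.
Variable h : V -> R.
Hypothesis Hh : lipschitz_on d (Kxy K x y) h.

Lemma gap_nonneg : 0 <= D - (h y - h x).
Proof.
  pose proof (Hh y x y_in_Kxy x_in_Kxy). rewrite (dist_sym V d Hd y x) in H. fold D in H.
  pose proof (Rle_abs (h y - h x)). lra.
Qed.

Lemma truncate_at_x : truncate h x = 0.
Proof.
  unfold truncate. rewrite (dist_refl V d Hd x). apply Rmin_right.
  pose proof gap_nonneg. lra.
Qed.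

Lemma truncate_bounds w : In w (Kxy K x y) -> 0 <= truncate h w - (h w - h x) <= D - (h y - h x).
Proof.
  intros Hw. pose proof gap_nonneg. unfold truncate. split.
  - enough (h w - h x <= Rmin (h w - h x + (D - (h y - h x))) (d x w)) by lra.
    apply Rmin_glb; [lra|]. rewrite (dist_sym V d Hd x w).
    eapply Rle_trans; [apply Rle_abs | apply Hh; [exact Hw | exact x_in_Kxy]].
  - pose proof (Rmin_l (h w - h x + (D - (h y - h x))) (d x w)). lra.
Qed.

Lemma truncate_in_ric_set : ric_set (grad d y x (Lap mu K (truncate h))).
Proof.
  exists (truncate h). split; [|split; [|reflexivity]].
  - intros u v Hu Hv. unfold truncate. apply Rmin_dist; [|apply dist_lipschitz, Hd].
    replace (h u - h x + (D - (h y - h x)) - (h v - h x + (D - (h y - h x)))) with (h u - h v)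
      by ring.
    apply Hh; assumption.
  - unfold grad. rewrite truncate_at_x. unfold truncate. fold D.
    replace (h y - h x + (D - (h y - h x))) with D by ring. rewrite Rmin_left by lra.
    pose proof D_pos. field. lra.
Qed.

Lemma Lap_gap_le :
  Lap mu K h y - Lap mu K h x <= - D * ric + (D - (h y - h x)) * spread.
Proof.
  set (g := truncate h). set (t := D - (h y - h x)).
  assert (Hg : Lap mu K g y - Lap mu K g x <= - D * ric).
  { pose proof (ric_le _ truncate_in_ric_set) as H. unfold grad in H.
    rewrite (dist_sym V d Hd y x) in H. fold D in H. pose proof D_pos.
    apply (Rmult_le_compat_l D) in H; [|lra]. fold g in H.
    replace (D * ((Lap mu K g x - Lap mu K g y) / D)) with (Lap mu K g x - Lap mu K g y) in H
      by (field; lra). lra. }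
  enough (Hcomp : (Lap mu K h y - Lap mu K h x) - (Lap mu K g y - Lap mu K g x) <=
                  t * spread) by lra.
  unfold spread. rewrite !Lap_gap, <- sumL_minus, <- sumL_scal_l. apply sumL_le. intros w Hw.
  apply nodup_In in Hw. pose proof (truncate_bounds w Hw) as Hb. fold g t in Hb.
  replace ((h w - h x) * (rate y w - rate x w) - (g w - g x) * (rate y w - rate x w))
    with ((h w - h x - g w) * (rate y w - rate x w)) by (unfold g; rewrite truncate_at_x; ring).
  eapply Rle_trans; [apply Rle_abs|]. rewrite Rabs_mult.
  apply Rmult_le_compat_r; [apply Rabs_pos|]. apply Rabs_le. lra.
Qed.

End Truncation.

Lemma mu_prob z e : z = x \/ z = y -> 0 <= e <= 1 ->
  (forall w, In w (Kxy K x y) -> 0 <= mu z e w) /\ lsum (Kxy K x y) (mu z e) = 1.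
Proof.
  intros Hz He. split; [intros w _; apply Hrw, He|].
  rewrite lsum_sumL. apply sum_mu_over; [exact S_nodup | apply incl_K_S, Hz | exact He].
Qed.

Lemma W1_upper e : 0 < e <= 1 -> e * spread <= 1 ->
  W1 d (Kxy K x y) (mu x e) (mu y e) <= D - e * D * ric + e * err e.
Proof.
  intros He HeC.
  destruct (mu_prob x e (or_introl eq_refl) ltac:(lra)) as [Hx0 Hx1].
  destruct (mu_prob y e (or_intror eq_refl) ltac:(lra)) as [Hy0 Hy1].
  apply (W1_le_of_dual_bound V d Hd _ _ _ Hx0 Hy0 Hx1 Hy1). intros h Hh.
  pose proof (dual_expansion e h He Hh) as Hexp. apply Rabs_le_between in Hexp.
  pose proof (Lap_gap_le h Hh) as Hgap. pose proof (gap_nonneg h Hh) as Ht.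
  set (t := D - (h y - h x)) in *.
  assert (e * (t * spread) <= t) by (replace (e * (t * spread)) with (t * (e * spread)) by ring;
    rewrite <- (Rmult_1_r t) at 2; apply Rmult_le_compat_l; assumption).
  assert (e * (Lap mu K h y - Lap mu K h x) <= e * (- D * ric + t * spread))
    by (apply Rmult_le_compat_l; lra).
  replace (h y - h x) with (D - t) in Hexp by (unfold t; ring). nra.
Qed.

Lemma W1_lower e f : 0 < e <= 1 -> lipschitz_on d (Kxy K x y) f -> grad d x y f = 1 ->
  D - e * D * grad d y x (Lap mu K f) - e * err e <= W1 d (Kxy K x y) (mu x e) (mu y e).
Proof.
  intros He Hf Hf1.
  destruct (mu_prob x e (or_introl eq_refl) ltac:(lra)) as [Hx0 Hx1].
  destruct (mu_prob y e (or_intror eq_refl) ltac:(lra)) as [Hy0 Hy1].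
  eapply Rle_trans; [|exact (dual_le_W1 V d Hd _ _ _ Hx0 Hy0 Hx1 Hy1 f Hf)].
  pose proof (dual_expansion e f He Hf) as Hexp. apply Rabs_le_between in Hexp.
  pose proof D_pos. unfold grad in *. rewrite (dist_sym V d Hd y x). fold D in Hf1 |- *.
  assert (Hfy : f y - f x = D) by (field_simplify_eq in Hf1; lra).
  replace (e * D * ((Lap mu K f x - Lap mu K f y) / D)) with (- (e * (Lap mu K f y - Lap mu K f x)))
    by (field; lra). lra.
Qed.

Lemma Ric_eps_sandwich : at_right 0 (fun e => forall c, ric_set c ->
  ric - err e / D <= Ric_eps d mu K e x y / e <= c + err e / D).
Proof.
  assert (Hspread : 0 <= spread) by (apply sumL_nonneg; intros; apply Rabs_pos).
  assert (Hpos : 0 < Rmin 1 (/ (spread + 1)))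
    by (apply Rmin_glb_lt; [lra | apply Rinv_0_lt_compat; lra]).
  eapply filter_imp; [|exact (at_right_0_le _ Hpos)]. intros e [He0 He1].
  pose proof (Rmin_l 1 (/ (spread + 1))). pose proof (Rmin_r 1 (/ (spread + 1))).
  assert (HeC : e * spread <= 1).
  { apply Rle_trans with (e * (spread + 1)); [nra|].
    apply Rmult_le_reg_r with (/ (spread + 1)); [apply Rinv_0_lt_compat; lra|].
    rewrite Rmult_assoc, Rinv_r, Rmult_1_r, Rmult_1_l by lra. lra. }
  intros c [f [Hf [Hf1 ->]]].
  pose proof (W1_upper e ltac:(lra) HeC) as Hup. pose proof (W1_lower e f ltac:(lra) Hf Hf1) as Hlo.
  unfold Ric_eps. fold D. set (W := W1 d (Kxy K x y) (mu x e) (mu y e)) in *.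
  pose proof D_pos. assert (HeD : 0 < e * D) by nra.
  replace ((1 - W / D) / e) with ((D - W) / (e * D)) by (field; lra).
  assert (HeD' : 0 <= / (e * D)) by (left; apply Rinv_0_lt_compat, HeD).
  split.
  - apply Rle_trans with ((e * D * ric - e * err e) / (e * D)); [right; field; lra|].
    apply Rmult_le_compat_r; [exact HeD' | lra].
  - apply Rle_trans with ((e * D * grad d y x (Lap mu K f) + e * err e) / (e * D));
      [|right; field; lra].
    apply Rmult_le_compat_r; [exact HeD' | lra].
Qed.

End Pair.
End RandomWalk.

Theorem mainTheorem12 (V : Type) (E : V -> V -> Prop) (d : V -> V -> R)
  (mu : V -> R -> V -> R) (K : V -> list V) :
  locally_finite_graph E -> is_metric d -> complete_metric d ->
  local_random_walk mu K -> time_analytic mu ->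
  forall x y : V, x <> y ->
  exists ric : R,
    filterlim (fun eps => Ric_eps d mu K eps x y / eps) (at_right 0) (locally ric) /\
    is_glb_Rbar
      (fun c => exists f : V -> R,
         (forall u v, In u (Kxy K x y) -> In v (Kxy K x y) -> Rabs (f u - f v) <= d u v) /\
         grad d x y f = 1 /\
         c = grad d y x (Lap mu K f))
      ric.
Proof.
  intros _ Hd _ Hrw Hta x y Hxy.
  pose proof (ric_is_glb V mu K Hrw Hta d Hd x y Hxy) as Hglb.
  exists (ric V mu K d x y). split; [|exact Hglb].
  exact (filterlim_glb_sandwich _ _ _ _ Hglb (err_lim V mu K Hta d x y)
           (Ric_eps_sandwich V mu K Hrw Hta d Hd x y Hxy)).
Qed.
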